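(* Let $(V,d)$ be a finite metric space with $|V|=n$, let $k\ge1$ be an integer, and let $\mathit{OPT}=\min_{C\subseteq V,\,|C|\le k}\max_{v\in V}d(v,C)$ be the optimal $k$-center radius. Suppose there are $m$ machines, each able to hold at most $c$ points, with $n/m\le c$ and $k\cdot m\le c$. Then the $k$-center problem on $V$ can be solved in two MapReduce rounds with approximation factor $4$, namely by the following procedure: in the first round, partition $V$ arbitrarily into sets $V_1,\dots,V_m$ with $|V_i|\le\lceil n/m\rceil$, and on each machine $i$ in parallel run Gonzalez's algorithm with parameter $k$ on $V_i$, obtaining a center set $C_i$; in the second round, send $C=\bigcup_i C_i$ (which has at most $k\cdot m\le c$ points) to a single machine and run Gonzalez's algorithm with parameter $k$ on $C$, obtaining $C^G$. The output $C^G$ has at most $k$ points and satisfies $\max_{v\in V} d(v,C^G)\le 4\cdot\mathit{OPT}$.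
   Context: Gonzalez's algorithm on a finite point set $S$ with parameter $k$: choose an arbitrary point of $S$ as the first center; then repeatedly choose as a new center a point of $S$ whose distance to the set of already chosen centers is maximum (ties broken arbitrarily), until $k$ centers have been chosen (or all of $S$, if $|S|\le k$). Here $d(v,C)=\min_{x\in C}d(v,x)$. *)

From mathcomp Require Import all_boot all_order all_algebra.
Set Implicit Arguments. Unset Strict Implicit. Unset Printing Implicit Defensive.
Import Order.TTheory GRing.Theory Num.Theory.
Local Open Scope ring_scope.

Section Defs.
Variables (R : realFieldType) (T : finType) (d : T -> T -> R).

Definition is_metric : Prop :=
  [/\ forall x y, d x y = 0 <-> x = y,
      forall x y, d x y = d y x &
      forall x y z, d x z <= d x y + d y z].

(* d(v, C) = min_{x in C} d(v, x).  Convention: 0 for empty C; the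
   definition is only ever used with a nonempty C below. *)
Definition dist_set (v : T) (C : {set T}) : R :=
  if [pick x in C] is Some x0 then \big[Num.min/d v x0]_(x in C) d v x else 0.

Definition radius (V C : {set T}) : R :=
  \big[Num.max/0]_(v in V) dist_set v C.

(* gonzalez k S C : C is a possible output of Gonzalez's algorithm with
   parameter k on S (first center arbitrary, ties broken arbitrarily).
   The sequence s lists the centers in the order they were chosen. *)
Definition gonzalez (k : nat) (S C : {set T}) : Prop :=
  exists s : seq T,
    [/\ uniq s, {subset s <= S}, size s = minn k #|S|,
        C = [set x in s] &
        forall (p : seq T) (c : T) (r : seq T), s = p ++ c :: r -> p != [::] ->
          forall y, y \in S -> dist_set y [set x in p] <= dist_set c [set x in p]].
End Defs.

(** Gonzalez's algorithm is a 2-approximation: if [y] were at distance more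
    than [2 OPT] from the centers [C] it picked out of [S], then the [k]
    centers together with [y] would be [k + 1] points of [S] pairwise more
    than [2 OPT] apart (every center was a farthest point when chosen), while
    two of them must share a nearest optimal center and so lie within
    [2 OPT] of each other.  Every [v] lies in some block [V_i]; its nearest
    local center [x] is within [2 OPT] of [v], and [x] is within [2 OPT] of
    [C^G] since [x] belongs to the input of the second round, so
    [d(v, C^G) <= 4 OPT]. *)

From mathcomp Require Import all_boot all_order all_algebra.
Import Order.TTheory GRing.Theory Num.Theory.
Local Open Scope ring_scope.
Set Implicit Arguments. Unset Strict Implicit.

Lemma leq_card_bigcup (I : Type) (T : finType) (r : seq I) (P : pred I)
    (F : I -> {set T}) :
  (#|\bigcup_(i <- r | P i) F i| <= \sum_(i <- r | P i) #|F i|)%N.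
Proof.
apply: (big_ind2 (fun (A : {set T}) n => #|A| <= n)%N) => [|A a B b hA hB|//].
  by rewrite cards0.
by apply: leq_trans (leq_card_setU A B) _; apply: leq_add.
Qed.

Section MetricFacts.
Variables (R : realFieldType) (T : finType) (d : T -> T -> R).
Hypothesis d_metric : is_metric d.

Lemma metric_refl x : d x x = 0.
Proof. by case: d_metric => d0 _ _; apply/d0. Qed.

Lemma metricC x y : d x y = d y x.
Proof. by case: d_metric. Qed.

Lemma metric_triangle x y z : d x z <= d x y + d y z.
Proof. by case: d_metric. Qed.

Lemma metric_ge0 x y : 0 <= d x y.
Proof.
have := metric_triangle x y x.
by rewrite metric_refl (metricC y x) -mulr2n pmulrn_lge0.
Qed.

Lemma dist_set_le v (C : {set T}) x : x \in C -> dist_set d v C <= d v x.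
Proof.
move=> xC; rewrite /dist_set; case: pickP => [x0 _|/(_ x)]; last by rewrite xC.
exact: bigmin_le_cond.
Qed.

Lemma dist_set_attained v (C : {set T}) x1 :
  x1 \in C -> exists2 x, x \in C & dist_set d v C = d v x.
Proof.
move=> x1C; rewrite /dist_set.
case: pickP => [x0 x0C|/(_ x1)]; last by rewrite x1C.
apply: (big_ind (fun r => exists2 x, x \in C & r = d v x)) => [|r1 r2|x xC].
- by exists x0.
- move=> [x xC ->] [y yC ->].
  by case: (leP (d v x) (d v y)) => _; [exists x | exists y].
- by exists x.
Qed.

Lemma dist_set_ge0 v (C : {set T}) : 0 <= dist_set d v C.
Proof.
have [->|[x xC]] := set_0Vmem C.
  by rewrite /dist_set; case: pickP => [x0|//]; rewrite inE.
by have [y _ ->] := dist_set_attained v xC; apply: metric_ge0.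
Qed.

Lemma dist_set_triangle v x (C : {set T}) x1 : x1 \in C ->
  dist_set d v C <= d v x + dist_set d x C.
Proof.
move=> x1C; have [z zC ->] := dist_set_attained x x1C.
exact: le_trans (dist_set_le v zC) (metric_triangle v x z).
Qed.

Lemma dist_set_subset v (A B : {set T}) x1 : x1 \in A -> A \subset B ->
  dist_set d v B <= dist_set d v A.
Proof.
move=> x1A /subsetP AB; have [z zA ->] := dist_set_attained v x1A.
exact/dist_set_le/AB.
Qed.

Lemma radius_ge (V C : {set T}) v : v \in V -> dist_set d v C <= radius d V C.
Proof. exact: le_bigmax_cond. Qed.

Lemma radius_ge0 (V C : {set T}) : 0 <= radius d V C.
Proof. exact: bigmax_ge_id. Qed.

Lemma radius_le (V C : {set T}) b : 0 <= b ->
  (forall v, v \in V -> dist_set d v C <= b) -> radius d V C <= b.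
Proof. exact: bigmax_le. Qed.

(* Pigeonhole: two of the [n + 1] points share a nearest center of [C]. *)
Lemma close_pair_of_cover n (z : 'I_n.+1 -> T) (V C : {set T}) :
  (forall i, z i \in V) -> C != set0 -> (#|C| <= n)%N ->
  exists i j, i != j /\ d (z i) (z j) <= 2 * radius d V C.
Proof.
move=> zV /set0Pn[c0 c0C] Cn.
have [f nearest_f] : exists f : 'I_n.+1 -> T,
    forall i, f i \in C /\ dist_set d (z i) C = d (z i) (f i).
  apply: (@fin_all_exists _ (fun=> T)
    (fun i x => x \in C /\ dist_set d (z i) C = d (z i) x)) => i.
  by have [x xC e] := dist_set_attained (z i) c0C; exists x.
have [/injectiveP f_inj|/injectivePn[i [j ij fij]]] := boolP (injectiveb f).
  have : (#|f @: [set: 'I_n.+1]| <= #|C|)%N.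
    by apply/subset_leq_card/subsetP => _ /imsetP[i _ ->]; case: (nearest_f i).
  by rewrite card_imset // cardsT card_ord => /leq_trans/(_ Cn); rewrite ltnn.
exists i, j; split => //.
apply: le_trans (metric_triangle _ (f i) _) _.
rewrite [2]mulr2n mulrDl mul1r lerD //.
  by case: (nearest_f i) => _ <-; apply: radius_ge.
by rewrite fij metricC; case: (nearest_f j) => _ <-; apply: radius_ge.
Qed.

End MetricFacts.

Section Gonzalez.
Variables (R : realFieldType) (T : finType) (d : T -> T -> R).
Hypothesis d_metric : is_metric d.
Variables (k : nat) (S C : {set T}).
Hypothesis gonz : gonzalez d k S C.

Lemma gonzalez_card : #|C| = minn k #|S|.
Proof. by case: gonz => s [us _ ss -> _]; rewrite cardsE (card_uniqP us). Qed.

Lemma gonzalez_sub : C \subset S.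
Proof.
by case: gonz => s [_ sS _ -> _]; apply/subsetP => x; rewrite inE => /sS.
Qed.

Lemma gonzalez_nonempty x : (1 <= k)%N -> x \in S -> exists y, y \in C.
Proof.
move=> k_ge1 xS; have : (0 < #|C|)%N.
  by rewrite gonzalez_card leq_min k_ge1; apply/card_gt0P; exists x.
by case/card_gt0P => y; exists y.
Qed.

Lemma gonzalez_all : (#|S| <= k)%N -> C = S.
Proof.
move=> Sk; apply/eqP; rewrite eqEcard gonzalez_sub gonzalez_card.
by rewrite leq_min Sk leqnn.
Qed.

(* The [k] centers in the order chosen, followed by [y]: each point is at
   least [dist_set y C] away from all earlier ones, because it was a farthest
   point from them when chosen (or is [y] itself). *)
Lemma gonzalez_separated y : (k < #|S|)%N -> y \in S ->
  exists z : 'I_k.+1 -> T,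
    forall i j, i != j -> dist_set d y C <= d (z i) (z j).
Proof.
case: gonz => s [_ _ ss C_def farthest] kS yS.
have sk : size s = k by rewrite ss (minn_idPl (ltnW kS)).
have s_k : nth y s k = y by rewrite nth_default ?sk.
have s_in_C i : (i < k)%N -> nth y s i \in C.
  by move=> ik; rewrite C_def inE mem_nth ?sk.
have sep_lt (i j : nat) :
    (i < j <= k)%N -> dist_set d y C <= d (nth y s i) (nth y s j).
  case/andP=> ij; rewrite leq_eqVlt => /orP[/eqP jk|jk].
    by rewrite jk s_k (metricC d_metric) dist_set_le // s_in_C // -jk.
  have s_split : s = take j s ++ nth y s j :: drop j.+1 s.
    by rewrite -drop_nth ?sk // cat_take_drop.
  have size_take_j : size (take j s) = j by rewrite size_take sk jk.
  have si_in_take : nth y s i \in [set x in take j s].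
    by rewrite inE -(nth_take y ij) mem_nth ?size_take_j.
  have take_ne0 : take j s != [::].
    by rewrite -size_eq0 size_take_j -lt0n (leq_ltn_trans (leq0n i) ij).
  have take_sub : [set x in take j s] \subset C.
    by rewrite C_def; apply/subsetP => x; rewrite !inE => /mem_take.
  apply: le_trans (dist_set_subset d y si_in_take take_sub) _.
  apply: le_trans (farthest _ _ _ s_split take_ne0 y yS) _.
  by rewrite (metricC d_metric); apply: dist_set_le.
exists (fun i : 'I_k.+1 => nth y s i) => i j; rewrite neq_ltn => /orP[] ij.
  by apply: sep_lt; rewrite ij -ltnS ltn_ord.
by rewrite (metricC d_metric); apply: sep_lt; rewrite ij -ltnS ltn_ord.
Qed.

Lemma gonzalez_dist_le (Copt : {set T}) y : Copt != set0 -> (#|Copt| <= k)%N ->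
  y \in S -> dist_set d y C <= 2 * radius d [set: T] Copt.
Proof.
move=> Copt_ne Copt_k yS.
have [Sk|kS] := leqP #|S| k.
  rewrite gonzalez_all // (le_trans (dist_set_le d y yS)) //.
  rewrite (metric_refl d_metric).
  by rewrite mulr_ge0 ?radius_ge0.
have [z z_sep] := gonzalez_separated kS yS.
have [i [j [ij z_close]]] :=
  close_pair_of_cover d_metric (fun i => in_setT (z i)) Copt_ne Copt_k.
exact: le_trans (z_sep i j ij) z_close.
Qed.

End Gonzalez.

Theorem lemma2 (R : realFieldType) (T : finType) (d : T -> T -> R)
    (k m c : nat) (P : 'I_m -> {set T}) (Cs : 'I_m -> {set T}) (CG : {set T}) :
  is_metric d ->
  (1 <= k)%N -> (0 < m)%N ->
  (#|T| <= c * m)%N ->        (* n / m <= c *)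
  (k * m <= c)%N ->
  (* round 1: a partition of V = T into V_1..V_m of sizes <= ceil(n/m) *)
  (forall i j, i != j -> [disjoint P i & P j]) ->
  (\bigcup_(i < m) P i = [set: T]) ->
  (forall i, #|P i| <= (#|T| + m).-1 %/ m)%N ->
  (forall i, gonzalez d k (P i) (Cs i)) ->
  (* round 2: Gonzalez on the union of the local center sets *)
  gonzalez d k (\bigcup_(i < m) Cs i) CG ->
  [/\ (#|\bigcup_(i < m) Cs i| <= c)%N,
      (#|CG| <= k)%N &
      forall Copt : {set T}, Copt != set0 -> (#|Copt| <= k)%N ->
        radius d [set: T] CG <= 4 * radius d [set: T] Copt].
Proof.
(* Disjointness and the block sizes only bound the load of the first round. *)
move=> d_metric k_ge1 _ _ kmc _ P_cover _ round1 round2; split.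
- apply: leq_trans (leq_card_bigcup _ _ _) _; apply: leq_trans kmc.
  rewrite mulnC -[m in (m * k)%N]card_ord -sum_nat_const leq_sum // => i _.
  by rewrite (gonzalez_card (round1 i)) geq_minl.
- by rewrite (gonzalez_card round2) geq_minl.
move=> Copt Copt_ne Copt_k.
apply: radius_le; first by rewrite mulr_ge0 ?(radius_ge0 d).
move=> v _; have : v \in \bigcup_(i < m) P i by rewrite P_cover inE.
case/bigcupP => i _ vPi.
have [x1 x1C] := gonzalez_nonempty (round1 i) k_ge1 vPi.
have [x xC dvx] := dist_set_attained d v x1C.
have xU : x \in \bigcup_(i < m) Cs i by apply/bigcupP; exists i.
have [y yCG] := gonzalez_nonempty round2 k_ge1 xU.
apply: le_trans (dist_set_triangle d_metric v x yCG) _.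
have -> : 4 = 2 + 2 :> R by rewrite -natrD.
rewrite -dvx mulrDl.
exact: lerD (gonzalez_dist_le d_metric (round1 i) Copt_ne Copt_k vPi)
  (gonzalez_dist_le d_metric round2 Copt_ne Copt_k xU).
Qed.
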